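(* Let $S'$ be a finite poset that has an induced sub-poset isomorphic to one of the posets $S_6,S_7,S_8$ below. Then there exists a stochastically monotone generator on $S'$ which is not realizably monotone. $S_6=\{a,b,c,d,e,f\}$ with strict relations exactly $a<b,a<c,a<d,a<e,a<f,b<e,c<e,c<f,d<f$. $S_7=\{a,b,c,d,e,f\}$ with strict relations exactly $a<d,a<f,b<e,b<f,c<d,c<e$. $S_8=\{a,b,c,d,e,f\}$ with strict relations exactly $a<e,a<f,b<d,b<e,b<f,c<d,c<e$. *)

From HB Require Import structures.
From mathcomp Require Import all_boot all_order all_algebra.
Set Implicit Arguments. Unset Strict Implicit. Unset Printing Implicit Defensive.
Import Order.TTheory GRing.Theory Num.Theory.

Local Open Scope ring_scope.

Section Gen.
Variables (R : realFieldType) (d : Order.disp_t) (T : finPOrderType d).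

Definition generator (Q : T -> T -> R) : Prop :=
  (forall x y : T, x != y -> 0 <= Q x y) /\ (forall x : T, \sum_(y : T) Q x y = 0).

Definition upset (U : {set T}) : Prop :=
  forall x y : T, (x <= y)%O -> x \in U -> y \in U.

Definition stoch_monotone (Q : T -> T -> R) : Prop :=
  forall (x y : T) (U : {set T}), upset U -> (x <= y)%O ->
    (x \in U) = (y \in U) ->
    \sum_(z in U) Q x z <= \sum_(z in U) Q y z.

Definition monotone_map (f : {ffun T -> T}) : bool :=
  [forall x, forall y, (x <= y)%O ==> (f x <= f y)%O].

(* Realizable monotonicity: Q is a nonnegative combination of the generators
   F_f - I of deterministic monotone maps f, i.e.
   Q(x,y) = sum_{f monotone} lam_f ([f x = y] - [x = y]). *)
Definition realizably_monotone (Q : T -> T -> R) : Prop :=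
  exists lam : {ffun T -> T} -> R,
    (forall f, 0 <= lam f) /\
    (forall x y : T,
       Q x y = \sum_(f | monotone_map f) lam f * ((f x == y)%:R - (x == y)%:R)).

End Gen.

(* The six-element posets, with a,b,c,d,e,f encoded as 0,1,2,3,4,5. *)
Definition S6_strict : seq (nat * nat) :=
  [:: (0,1); (0,2); (0,3); (0,4); (0,5); (1,4); (2,4); (2,5); (3,5)]%N.
Definition S7_strict : seq (nat * nat) :=
  [:: (0,3); (0,5); (1,4); (1,5); (2,3); (2,4)]%N.
Definition S8_strict : seq (nat * nat) :=
  [:: (0,4); (0,5); (1,3); (1,4); (1,5); (2,3); (2,4)]%N.

Definition rel_of (s : seq (nat * nat)) (i j : 'I_6) : bool :=
  (i == j) || ((nat_of_ord i, nat_of_ord j) \in s).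

Definition induced_embedding (d : Order.disp_t) (T : finPOrderType d)
  (le : 'I_6 -> 'I_6 -> bool) (g : 'I_6 -> T) : Prop :=
  injective g /\ (forall i j : 'I_6, le i j = (g i <= g j)%O).

(* The generator moves every state at unit rate to copies of two fixed points p < q of the
   embedded poset, the targets depending only on the profile of the state: the copy points
   below it and the copy points above it.  In particular it swaps g p and g q.  There are
   finitely many profiles, and an up-set of T restricts to an up-set of the copy, so Massey's
   conditions reduce to a finite computation on the copy.  A monotone map carrying positive
   weight in a realization moves copy points only along jumps of the generator, hence
   restricts to a map of the copy.  Enumerating these maps shows that any weight spent on a
   set A of jumps between copy points is also spent on moving points of a set C, while the
   rates on A exceed the exit rates of C. *)

From HB Require Import structures.
From mathcomp Require Import all_boot all_order all_algebra.
Set Implicit Arguments. Unset Strict Implicit. Unset Printing Implicit Defensive.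
Import Order.TTheory GRing.Theory Num.Theory.

Local Open Scope ring_scope.

(* Subsets of the copy are sequences and the copy is enumerated by ord_seq rather than
   enum 'I_n, so that the finite checks below evaluate under vm_compute. *)
Fixpoint ord_seq n : seq 'I_n :=
  if n is n'.+1 then ord0 :: map (lift ord0) (ord_seq n') else [::].

Lemma mem_ord_seq n (i : 'I_n) : i \in ord_seq n.
Proof.
elim: n i => [|n IHn] i; first by case: i.
by rewrite inE; case: (unliftP ord0 i) => [j ->|->]; rewrite ?eqxx ?map_f ?orbT.
Qed.

Fixpoint subseqs (T : Type) (s : seq T) : seq (seq T) :=
  if s is x :: s' then let r := subseqs s' in [seq x :: t | t <- r] ++ r else [:: [::]].

Lemma filter_in_subseqs (T : eqType) (a : pred T) (s : seq T) : filter a s \in subseqs s.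
Proof.
by elim: s => [|x s IHs] //=; rewrite mem_cat; case: (a x); rewrite ?map_f ?IHs ?orbT.
Qed.

Fixpoint choices (T U : Type) (F : T -> seq U) (s : seq T) : seq (seq U) :=
  if s is x :: s' then [seq y :: r | y <- F x, r <- choices F s'] else [:: [::]].

Lemma map_in_choices (T U : eqType) (F : T -> seq U) (h : T -> U) (s : seq T) :
  {in s, forall x, h x \in F x} -> map h s \in choices F s.
Proof.
elim: s => [|x s IHs] //= hF.
by rewrite allpairs_f ?hF ?mem_head // IHs // => y ys; rewrite hF // inE ys orbT.
Qed.

Definition lookup (T : eqType) (s hs : seq T) (x : T) : T := nth x hs (index x s).

Lemma lookup_map (T : eqType) (s : seq T) (h : T -> T) x : x \in s -> lookup s (map h s) x = h x.
Proof. by move=> xs; rewrite /lookup (nth_map x) ?nth_index ?index_mem. Qed.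

Lemma sum_nat_count (R : pzSemiRingType) (I : Type) (s : seq I) (a : pred I) :
  \sum_(i <- s) (a i)%:R = (count a s)%:R :> R.
Proof.
rewrite -sum1_count natr_sum [RHS]big_mkcond.
by apply: eq_bigr => i _; case: (a i).
Qed.

Lemma sum_indicator (R : pzSemiRingType) (T : finType) (P : pred T) (a : T) :
  \sum_(z | P z) (a == z)%:R = (P a)%:R :> R.
Proof.
rewrite big_mkcond (bigD1 a) //= eqxx big1 ?addr0; first by case: (P a).
by move=> z; rewrite eq_sym => /negbTE ->; case: (P z).
Qed.

Section JumpGenerator.
Variables (R : realFieldType) (d : Order.disp_t) (T : finPOrderType d).
Variables (I : Type) (g : I -> T) (J : T -> seq I).

Definition jump_gen (x y : T) : R := \sum_(i <- J x) ((g i == y)%:R - (x == y)%:R).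

Lemma sum_jump_gen (P : pred T) (x : T) :
  \sum_(z | P z) jump_gen x z = \sum_(i <- J x) ((P (g i))%:R - (P x)%:R).
Proof. by rewrite exchange_big /=; apply: eq_bigr => i _; rewrite sumrB !sum_indicator. Qed.

Lemma sum_jump_gen_out (P : pred T) (x : T) : ~~ P x ->
  \sum_(z | P z) jump_gen x z = (count (P \o g) (J x))%:R.
Proof.
move/negbTE=> Px; rewrite sum_jump_gen Px -sum_nat_count.
by apply: eq_bigr => i _; rewrite subr0.
Qed.

Lemma sum_jump_gen_in (P : pred T) (x : T) : P x ->
  \sum_(z | P z) jump_gen x z = - (count (predC P \o g) (J x))%:R.
Proof.
move=> Px; rewrite sum_jump_gen Px -sum_nat_count -sumrN.
by apply: eq_bigr => i _ /=; case: (P (g i)); rewrite ?subrr ?oppr0 ?sub0r.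
Qed.

Lemma jump_gen_generator : generator jump_gen.
Proof.
split=> [x y /negbTE xy | x].
  by apply: sumr_ge0 => i _; rewrite xy subr0 ler0n.
by rewrite (sum_jump_gen_in (P := predT)) // (eq_count (a2 := pred0)) // count_pred0 oppr0.
Qed.

End JumpGenerator.

Section Realizable.
Variables (R : realFieldType) (d : Order.disp_t) (T : finPOrderType d).

Definition along_transitions (Q : T -> T -> R) (f : T -> T) :=
  forall x, f x != x -> Q x (f x) != 0.

Lemma monotone_mapP (f : {ffun T -> T}) : monotone_map f -> {homo f : x y / (x <= y)%O}.
Proof. by move=> /forallP mf x y; move/forallP/(_ y)/implyP: (mf x). Qed.

(* Weak LP duality: the rates on the edges E are paid by the realizing maps, and every map
   that may appear pays for at most as many edges as it moves points of C. *)
Lemma realizable_flow_bound (Q : T -> T -> R) (E : seq (T * T)) (C : seq T) :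
  all (fun e => e.1 != e.2) E ->
  (forall f : {ffun T -> T}, monotone_map f -> along_transitions Q f ->
     (count (fun e => f e.1 == e.2) E <= count (fun c => f c != c) C)%N) ->
  realizably_monotone Q ->
  \sum_(e <- E) Q e.1 e.2 <= \sum_(c <- C) \sum_(y | y != c) Q c y.
Proof.
move=> /allP offE flow [lam [lam_ge0 HQ]].
have Qoff x y : x != y -> Q x y = \sum_(f | monotone_map f) lam f * (f x == y)%:R.
  by move=> /negbTE xy; rewrite HQ; apply: eq_bigr => f _; rewrite xy subr0.
have along f : monotone_map f -> lam f != 0 -> along_transitions Q f.
  move=> mf lf x fx; rewrite Qoff 1?[x == _]eq_sym //; apply: contra lf => /eqP Q0.
  have := psumr_eq0P (fun h _ => mulr_ge0 (lam_ge0 h) (ler0n _ _)) Q0 mf.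
  by rewrite eqxx mulr1 => ->.
have exit c : \sum_(y | y != c) Q c y = \sum_(f | monotone_map f) lam f * (f c != c)%:R.
  rewrite (eq_bigr (fun y => \sum_(f | monotone_map f) lam f * (f c == y)%:R)).
    by rewrite exchange_big; apply: eq_bigr => f _; rewrite -mulr_sumr sum_indicator.
  by move=> y yc; rewrite Qoff // eq_sym.
rewrite (eq_big_seq _ (fun e eE => Qoff _ _ (offE e eE))) (eq_bigr _ (fun c _ => exit c)).
rewrite !(exchange_big _ _ (index_enum _)) /=.
apply: ler_sum => f mf; rewrite -!mulr_sumr !sum_nat_count.
have [-> | lf] := eqVneq (lam f) 0; first by rewrite !mul0r.
by rewrite ler_wpM2l ?lam_ge0 // ler_nat; apply: flow (along f mf lf).
Qed.

End Realizable.

Section Profiles.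
Variables (I : eqType) (le : rel I) (s : seq I).

Definition downclosed (D : seq I) := all (fun i => all (fun j => le j i ==> (j \in D)) s) D.
Definition upclosed (U : seq I) := all (fun i => all (fun j => le i j ==> (j \in U)) s) U.

Definition profiles : seq (seq I * seq I) :=
  [seq t : seq I * seq I <- [seq (D, U) | D <- subseqs s, U <- subseqs s] |
     [&& downclosed t.1, upclosed t.2 & all (fun i => all (le i) t.2) t.1]].

Definition upsets : seq (seq I) := [seq V <- subseqs s | upclosed V].

(* Massey's condition for the states of profiles t1 <= t2 and the up-set V of the copy, in
   the two cases where both states lie outside, resp. inside, the up-set. *)
Definition monotone_rule_at (F : seq I -> seq I -> seq I) (t1 t2 : seq I * seq I) (V : seq I) :=
  (~~ has (mem V) t2.1 ==> (count (mem V) (F t1.1 t1.2) <= count (mem V) (F t2.1 t2.2))%N) &&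
  (all (mem V) t1.2 ==>
     (count (predC (mem V)) (F t2.1 t2.2) <= count (predC (mem V)) (F t1.1 t1.2))%N).

Definition monotone_rule (F : seq I -> seq I -> seq I) :=
  let ps := profiles in let us := upsets in
  all (fun t1 => all (fun t2 =>
    [&& all (mem t2.1) t1.1 & all (mem t1.2) t2.2] ==> all (monotone_rule_at F t1 t2) us)
    ps) ps.

End Profiles.

Section StochMonotone.
Variables (R : realFieldType) (d : Order.disp_t) (T : finPOrderType d).
Variables (I : eqType) (le : rel I) (s : seq I) (g : I -> T).
Hypothesis s_complete : forall i, i \in s.
Hypothesis le_g : forall i j, le i j = (g i <= g j)%O.

Definition below (x : T) := [seq i <- s | (g i <= x)%O].
Definition above (x : T) := [seq i <- s | (x <= g i)%O].

Lemma mem_below x i : (i \in below x) = (g i <= x)%O.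
Proof. by rewrite mem_filter s_complete andbT. Qed.

Lemma mem_above x i : (i \in above x) = (x <= g i)%O.
Proof. by rewrite mem_filter s_complete andbT. Qed.

Lemma profile_in (x : T) : (below x, above x) \in profiles le s.
Proof.
rewrite mem_filter allpairs_f ?filter_in_subseqs // andbT /=.
apply/and3P; split; apply/allP => i.
- rewrite mem_below => ix; apply/allP => j _; apply/implyP.
  by rewrite mem_below le_g => /le_trans; apply.
- rewrite mem_above => xi; apply/allP => j _; apply/implyP.
  by rewrite mem_above le_g; apply: le_trans.
- by rewrite mem_below => ix; apply/allP => j; rewrite mem_above le_g; apply: le_trans.
Qed.

Lemma jump_gen_stoch_monotone (F : seq I -> seq I -> seq I) : monotone_rule le s F ->
  stoch_monotone (jump_gen R g (fun x => F (below x) (above x))).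
Proof.
move=> mono x y U upU lexy xyU.
set V := [seq i <- s | g i \in U].
have memV i : (i \in V) = (g i \in U) by rewrite mem_filter s_complete andbT.
have V_up : V \in upsets le s.
  rewrite mem_filter filter_in_subseqs andbT.
  apply/allP => i; rewrite memV => Ui; apply/allP => j _; apply/implyP.
  by rewrite le_g memV => /upU/(_ Ui).
have ordered : all (mem (below y)) (below x) && all (mem (above x)) (above y).
  by apply/andP; split; apply/allP => i /=; rewrite !(mem_below, mem_above) => hi;
    [exact: le_trans hi lexy | exact: le_trans lexy hi].
have /andP[/= /implyP out_case /implyP in_case] :=
  allP (implyP (allP (allP mono _ (profile_in x)) _ (profile_in y)) ordered) _ V_up.
have [xU | xU] := boolP (x \in U).
- rewrite !sum_jump_gen_in -?xyU // lerN2 ler_nat.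
  have cV : predC (mem V) =1 [predC U] \o g by move=> i /=; rewrite memV.
  rewrite -!(eq_count cV); apply: in_case; apply/allP => i /=.
  by rewrite mem_above memV => xi; apply: upU xi xU.
- rewrite !sum_jump_gen_out -?xyU // ler_nat.
  have cV : mem V =1 mem U \o g by move=> i /=; rewrite memV.
  rewrite -!(eq_count cV); apply: out_case; apply/hasPn => i /=.
  by rewrite mem_below memV => iy; apply/negP => /(upU _ _ iy); rewrite -xyU (negbTE xU).
Qed.

End StochMonotone.

Section Certificate.
Variables (I : eqType) (le : rel I) (s : seq I).

Definition monotone_on (h : I -> I) := all (fun i => all (fun j => le i j ==> le (h i) (h j)) s) s.

(* K i lists the jumps of the copy point i; the maps lookup s hs range over all h with
   h i \in i :: K i. *)
Definition copy_certificate (K : I -> seq I) (A : seq (I * I)) (C : seq I) : bool :=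
  [&& all (fun e => e.1 != e.2) A,
      (sumn [seq count (predC1 c) (K c) | c <- C] <
       sumn [seq count (pred1 e.2) (K e.1) | e <- A])%N &
      all (fun hs => let h := lookup s hs in
             monotone_on h ==> (count (fun e => h e.1 == e.2) A <= count (fun c => h c != c) C)%N)
          (choices (fun i => i :: K i) s)].

End Certificate.

Section CopyObstruction.
Variables (R : realFieldType) (d : Order.disp_t) (T : finPOrderType d).
Variables (I : eqType) (le : rel I) (s : seq I) (g : I -> T).
Hypothesis s_complete : forall i, i \in s.
Hypothesis g_inj : injective g.
Hypothesis le_g : forall i j, le i j = (g i <= g j)%O.
Variables (J : T -> seq I) (K : I -> seq I).
Hypothesis JK : forall i, J (g i) = K i.

Let Q := jump_gen R g J.

Lemma jump_gen_edge i j : i != j -> Q (g i) (g j) = (count (pred1 j) (K i))%:R.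
Proof.
move=> /negbTE ij; rewrite /Q /jump_gen JK (inj_eq g_inj) ij -sum_nat_count.
by apply: eq_bigr => k _; rewrite subr0 (inj_eq g_inj).
Qed.

Lemma jump_gen_exit i : \sum_(y | y != g i) Q (g i) y = (count (predC1 i) (K i))%:R.
Proof.
rewrite sum_jump_gen_out ?eqxx // JK; congr (_%:R).
by apply: eq_count => k /=; rewrite (inj_eq g_inj).
Qed.

Lemma jump_gen_along (f : T -> T) i : along_transitions Q f -> f (g i) \in map g (i :: K i).
Proof.
move=> alf; have [-> | fi] := eqVneq (f (g i)) (g i); first exact: mem_head.
have := alf _ fi; rewrite /Q /jump_gen JK [g i == _]eq_sym (negbTE fi).
under eq_bigr do rewrite subr0.
rewrite sum_nat_count pnatr_eq0 -lt0n -has_count => /hasP[k kK /eqP gk].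
by rewrite inE -gk map_f ?orbT.
Qed.

Lemma copy_certificate_not_realizable A C :
  copy_certificate le s K A C -> ~ realizably_monotone Q.
Proof.
case/and3P => offA + maps realQ; rewrite !sumnE !big_map => total.
set E := [seq (g e.1, g e.2) | e <- A].
have offE : all (fun e => e.1 != e.2) E.
  by rewrite all_map; apply: sub_all offA => e; rewrite /= (inj_eq g_inj).
have flow (f : {ffun T -> T}) : monotone_map f -> along_transitions Q f ->
    (count (fun e => f e.1 == e.2) E <= count (fun c => f c != c) (map g C))%N.
  move=> mf alf.
  pose h i := nth i (i :: K i) (index (f (g i)) (map g (i :: K i))).
  have index_lt i : (index (f (g i)) (map g (i :: K i)) < size (i :: K i))%N.
    by rewrite -(size_map g) index_mem jump_gen_along.
  have gh i : g (h i) = f (g i) by rewrite -(nth_map _ (g i)) ?nth_index ?jump_gen_along.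
  have hs_in : map h s \in choices (fun i => i :: K i) s.
    by apply: map_in_choices => i _; apply: mem_nth.
  have hmono : monotone_on le s (lookup s (map h s)).
    apply/allP => i _; apply/allP => j _; apply/implyP.
    by rewrite !lookup_map // !le_g !gh; apply: monotone_mapP.
  have /= bound := implyP (allP maps _ hs_in) hmono.
  rewrite !count_map; apply: leq_trans (leq_trans _ bound) _;
    by apply/eq_leq/eq_count => x /=; rewrite lookup_map // -gh (inj_eq g_inj).
have := realizable_flow_bound offE flow realQ.
rewrite !big_map (eq_big_seq _ (fun e eA => jump_gen_edge (allP offA e eA))).
by rewrite (eq_bigr _ (fun c _ => jump_gen_exit c)) -!natr_sum ler_nat leqNgt total.
Qed.

End CopyObstruction.

(* D and U are the copy points below and above the current state. *)
Definition jump_rule (I : eqType) (p q : I) (P : seq I) (D U : seq I) : seq I :=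
  if q \in D then (if q \in U then [:: p] else [::])
  else if p \in U then (if p \in D then [:: q] else if nilp D then [::] else [:: p])
  else if (p \in D) && (q \in U) then [:: p; q]
  else if has (mem P) U then [:: p] else [:: q].

Definition rule_witness (I : eqType) (le : rel I) (s : seq I) (p q : I) (P : seq I)
    (A : seq (I * I)) (C : seq I) : bool :=
  let F := jump_rule p q P in
  monotone_rule le s F &&
  copy_certificate le s (fun i => F [seq j <- s | le j i] [seq j <- s | le i j]) A C.

Lemma rule_witness_obstruction (R : realFieldType) (d : Order.disp_t) (T : finPOrderType d)
    (I : eqType) (le : rel I) (s : seq I) (g : I -> T) p q P A C :
  (forall i, i \in s) -> injective g -> (forall i j, le i j = (g i <= g j)%O) ->
  rule_witness le s p q P A C ->
  exists Q : T -> T -> R, generator Q /\ stoch_monotone Q /\ ~ realizably_monotone Q.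
Proof.
move=> s_complete g_inj le_g /andP[mono cert].
exists (jump_gen R g (fun x => jump_rule p q P (below s g x) (above s g x))).
split; first exact: jump_gen_generator.
split; first exact: jump_gen_stoch_monotone.
apply: (copy_certificate_not_realizable s_complete g_inj le_g _ cert) => i.
by congr jump_rule; apply: eq_filter => j; rewrite le_g.
Qed.

Definition rule_witness6 (le : rel 'I_6) (p q : nat) (P : seq nat) (A : seq (nat * nat))
    (C : seq nat) : bool :=
  let o := nth ord0 (ord_seq 6) in
  rule_witness le (ord_seq 6) (o p) (o q) (map o P) [seq (o e.1, o e.2) | e <- A] (map o C).

Lemma rule_witness6_obstruction (R : realFieldType) (d : Order.disp_t) (T : finPOrderType d)
    (le : rel 'I_6) p q P A C :
  (exists g : 'I_6 -> T, induced_embedding le g) -> rule_witness6 le p q P A C ->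
  exists Q : T -> T -> R, generator Q /\ stoch_monotone Q /\ ~ realizably_monotone Q.
Proof.
by move=> [g [g_inj le_g]]; apply: (rule_witness_obstruction R (@mem_ord_seq 6) g_inj le_g).
Qed.

Lemma S6_witness :
  rule_witness6 (rel_of S6_strict) 2 5 [:: 0; 1; 3; 5] [:: (0, 2); (2, 5); (5, 2)] [:: 1; 3].
Proof. by vm_compute. Qed.

Lemma S7_witness : rule_witness6 (rel_of S7_strict) 1 5 [:: 0; 2; 5] [:: (1, 5); (5, 1)] [:: 2].
Proof. by vm_compute. Qed.

Lemma S8_witness : rule_witness6 (rel_of S8_strict) 0 5 [:: 1; 2; 5] [:: (0, 5); (5, 0)] [:: 2].
Proof. by vm_compute. Qed.

Unset Implicit Arguments.

Theorem proposition4p3 (R : realFieldType) (d : Order.disp_t) (T : finPOrderType d) :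
  ((exists g : 'I_6 -> T, induced_embedding (rel_of S6_strict) g) \/
   (exists g : 'I_6 -> T, induced_embedding (rel_of S7_strict) g) \/
   (exists g : 'I_6 -> T, induced_embedding (rel_of S8_strict) g)) ->
  exists Q : T -> T -> R,
    generator Q /\ stoch_monotone Q /\ ~ realizably_monotone Q.
Proof.
case=> [emb | [emb | emb]].
- exact: rule_witness6_obstruction emb S6_witness.
- exact: rule_witness6_obstruction emb S7_witness.
- exact: rule_witness6_obstruction emb S8_witness.
Qed.
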